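(* Let $(\Omega,\mathcal F,\mathbb P)$ be a probability space, let $\mathfrak d,N\in\mathbb N$, $a\in\mathbb R$, $b\in(a,\infty)$, $\vartheta\in[a,b]^{\mathfrak d}$, $L,\varepsilon\in(0,\infty)$, let $\mathfrak E\colon[a,b]^{\mathfrak d}\times\Omega\to\mathbb R$ be $(\mathcal B([a,b]^{\mathfrak d})\otimes\mathcal F)/\mathcal B(\mathbb R)$-measurable with $|\mathfrak E(x,\omega)-\mathfrak E(y,\omega)|\le L\|x-y\|_\infty$ for all $x,y\in[a,b]^{\mathfrak d}$, $\omega\in\Omega$, and let $\Theta_n\colon\Omega\to[a,b]^{\mathfrak d}$, $n\in\{1,\dots,N\}$, be i.i.d. random variables with $\Theta_1$ continuous uniformly distributed on $[a,b]^{\mathfrak d}$. Then, writing $\mathfrak E(\Theta_n)$ for $\omega\mapsto\mathfrak E(\Theta_n(\omega),\omega)$, $$\mathbb P\Bigl(\bigl[\min_{n\in\{1,\dots,N\}}\mathfrak E(\Theta_n)\bigr]-\mathfrak E(\vartheta)>\varepsilon\Bigr)\le\exp\Bigl(-N\min\Bigl\{1,\frac{\varepsilon^{\mathfrak d}}{L^{\mathfrak d}(b-a)^{\mathfrak d}}\Bigr\}\Bigr).$$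
   Context: $\|\cdot\|_\infty$ is the maximum norm on $\mathbb R^{\mathfrak d}$. *)

From HB Require Import structures.
From mathcomp Require Import all_boot all_order all_algebra.
From mathcomp Require Import all_classical all_reals all_analysis.
Set Implicit Arguments.
Unset Strict Implicit.
Unset Printing Implicit Defensive.
Import Order.TTheory GRing.Theory Num.Theory.
Import numFieldNormedType.Exports.
Local Open Scope classical_set_scope.
Local Open Scope ring_scope.

(* Points of R^d are d-tuples; d.-tuple R carries the library's product
   sigma-algebra (generated by the coordinate maps), i.e. B(R^d). *)

Definition cube (R : realType) (d : nat) (a b : R) : set (d.-tuple R) :=
  [set x | forall i : 'I_d, a <= tnth x i <= b].

Definition maxdist (R : realType) (d : nat) (x y : d.-tuple R) : R :=
  \big[Num.max/0]_(i < d) `|tnth x i - tnth y i|.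

Definition box (R : realType) (d : nat) (A : 'I_d -> set R) : set (d.-tuple R) :=
  [set x | forall i : 'I_d, A i (tnth x i)].

(* X is continuous uniformly distributed on [a,b]^d: its law is the
   normalized d-dimensional Lebesgue measure on [a,b]^d, i.e. (as the
   d-fold product of the one-dimensional Lebesgue measure) it agrees on every
   measurable rectangle with prod_i lambda(A_i /\ [a,b]) / (b-a). *)
Definition uniform_on_cube (dO : measure_display) (O : measurableType dO)
  (R : realType) (P : probability O R) (d : nat) (a b : R)
  (X : O -> d.-tuple R) : Prop :=
  forall A : 'I_d -> set R, (forall i, measurable (A i)) ->
    P (X @^-1` box A) =
    (\prod_(i < d) (lebesgue_measure (A i `&` `[a, b]%classic) * ((b - a)^-1)%:E))%E.

Definition independent_family (dO : measure_display) (O : measurableType dO)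
  (R : realType) (P : probability O R) (d N : nat)
  (X : nat -> O -> d.-tuple R) : Prop :=
  forall A : nat -> set (d.-tuple R), (forall n, measurable (A n)) ->
    P (\big[setI/setT]_(1 <= n < N.+1) (X n @^-1` A n)) =
    (\prod_(1 <= n < N.+1) P (X n @^-1` A n))%E.

Definition identically_distributed (dO : measure_display) (O : measurableType dO)
  (R : realType) (P : probability O R) (d N : nat)
  (X : nat -> O -> d.-tuple R) : Prop :=
  forall n, (1 <= n <= N)%N -> forall A : set (d.-tuple R), measurable A ->
    P (X n @^-1` A) = P (X 1%N @^-1` A).

Definition min1N (R : realType) (N : nat) (f : nat -> R) : R :=
  \big[Num.min/f 1%N]_(2 <= n < N.+1) f n.

From HB Require Import structures.
From mathcomp Require Import all_boot all_order all_algebra.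
From mathcomp Require Import all_classical all_reals all_analysis.
From mathcomp Require Import measurable_realfun lra.
Import Order.TTheory GRing.Theory Num.Theory.
Import numFieldNormedType.Exports.
Local Open Scope classical_set_scope.
Local Open Scope ring_scope.
Set Implicit Arguments.
Unset Strict Implicit.

(* If some [Theta n] falls into the sup-norm ball of radius [eps / L] around
   [theta], the Lipschitz bound gives [E (Theta n) <= E theta + eps]; so on the
   event in question every [Theta n] avoids that ball.  The ball meets the cube
   in a box whose sides all have length at least [min (eps / L) (b - a)], hence
   each [Theta n] hits it with probability at least
   [q = min 1 ((eps / (L (b - a))) ^ d)].  Independence and [1 - q <= exp (- q)]
   bound the probability of avoiding it [N] times by [exp (- N q)]. *)

Lemma lee_prod (R : realDomainType) (I : Type) (r : seq I) (P : pred I)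
    (F G : I -> \bar R) :
  (forall i, P i -> 0 <= F i <= G i)%E ->
  (\prod_(i <- r | P i) F i <= \prod_(i <- r | P i) G i)%E.
Proof.
move=> FG.
have /andP[//] :
  (0 <= \prod_(i <- r | P i) F i <= \prod_(i <- r | P i) G i)%E.
elim/big_rec2: _ => [|i x y Pi /andP[x0 xy]]; first by rewrite lee01 lexx.
have /andP[Fi0 FGi] := FG i Pi.
by rewrite mule_ge0 ?lee_pmul.
Qed.

Lemma expr_min1 (R : realDomainType) (x : R) (n : nat) :
  0 <= x -> Num.min 1 x ^+ n = Num.min 1 (x ^+ n).
Proof.
move=> x0; have [x1|x1] := leP x 1.
  by rewrite !min_r ?exprn_ile1.
by rewrite !min_l ?expr1n ?exprn_ege1 ?(ltW x1).
Qed.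

Lemma expr1B_le_expR (R : realType) (q : R) (n : nat) :
  q <= 1 -> (1 - q) ^+ n <= expR (- n%:R * q).
Proof.
move=> q1; rewrite mulNr -mulrN expRM_natl.
apply: lerXn2r; rewrite ?nnegrE ?subr_ge0 ?expR_ge0 //.
exact: expR_ge1Dx.
Qed.

Lemma lebesgue_measure_itvcc_setI_ge (R : realType) (a b t r : R) :
  a < b -> a <= t <= b -> 0 < r ->
  ((Num.min (b - a) r)%R%:E
   <= lebesgue_measure (`[(t - r)%R, (t + r)%R]%classic `&` `[a, b]%classic))%E.
Proof.
move=> ab /andP[ta tb] r0.
set m := Num.min (b - a) r.
have m0 : 0 < m by rewrite lt_min r0 subr_gt0 ab.
have [mba mr] : m <= b - a /\ m <= r by rewrite !ge_min !lexx orbT.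
(* [[c, c + m]] has length [m] and lies in both intervals *)
set c := Num.min t (b - m).
have [ct cbm] : c <= t /\ c <= b - m by rewrite !ge_min !lexx orbT.
have ac : a <= c by rewrite le_min ta /=; lra.
have trc : t - r <= c by rewrite le_min; apply/andP; split; lra.
have sub : `[c, c + m]%classic `<=` `[t - r, t + r]%classic `&` `[a, b]%classic.
  move=> x /=; rewrite !in_itv /= => /andP[cx xcm].
  split; apply/andP; split; lra.
have mI : measurable (`[t - r, t + r]%classic `&` `[a, b]%classic).
  by apply: measurableI; exact: measurable_itv.
apply: le_trans _ (le_measure lebesgue_measure (mem_set (measurable_itv _))
  (mem_set mI) sub).
have := lebesgue_measure_itv `[c, c + m].
by rewrite /= lte_fin ltrDl m0 -EFinD addrAC subrr add0r => ->.
Qed.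

Lemma min1N_le (R : realType) (N : nat) (f : nat -> R) (n : nat) :
  (1 <= n <= N)%N -> min1N N f <= f n.
Proof.
case/andP; rewrite leq_eqVlt => /orP[/eqP <- _|n1 nN]; first exact: bigmin_le_id.
by apply: ge_bigmin_seq; rewrite // mem_index_iota n1 ltnS.
Qed.

Section box.
Variables (R : realType) (d : nat).

Lemma box_measurable (A : 'I_d -> set R) :
  (forall i, measurable (A i)) -> measurable (box A).
Proof.
move=> mA.
have -> : box A = \bigcap_(i in [set: 'I_d]) ((@tnth d R)^~ i @^-1` A i).
  by apply/seteqP; split => [x Ax i _|x Ax i]; [|apply: Ax].
apply: fin_bigcap_measurable => // i _.
by rewrite -[X in measurable X]setTI; exact: measurable_tnth.
Qed.

Lemma cube_measurable (a b : R) : measurable (cube a b : set (d.-tuple R)).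
Proof.
have -> : cube a b = box (fun=> `[a, b]%classic) :> set (d.-tuple R).
  by apply/seteqP; split => x xab i; have := xab i; rewrite /= in_itv.
by apply: box_measurable => i; exact: measurable_itv.
Qed.

Definition maxball (t : d.-tuple R) (r : R) : set (d.-tuple R) :=
  box (fun i => `[tnth t i - r, tnth t i + r]%classic).

Lemma maxball_measurable (t : d.-tuple R) (r : R) : measurable (maxball t r).
Proof. by apply: box_measurable => i; exact: measurable_itv. Qed.

Lemma maxdist_le_maxball (t x : d.-tuple R) (r : R) :
  0 <= r -> maxball t r x -> maxdist x t <= r.
Proof.
move=> r0 tx; apply: bigmax_le => // i _.
by have := tx i; rewrite /= in_itv /= ler_distl.
Qed.

Lemma min1N_gap_notin_maxball (N : nat) (L eps c : R) (f : nat -> R)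
    (x : nat -> d.-tuple R) (t : d.-tuple R) :
  0 < L -> 0 <= eps ->
  (forall n, (1 <= n <= N)%N -> `|f n - c| <= L * maxdist (x n) t) ->
  eps < min1N N f - c ->
  forall n, (1 <= n <= N)%N -> ~ maxball t (eps / L) (x n).
Proof.
move=> L0 eps0 lipf gap n nN txn.
have := min1N_le f nN; have := ler_norm (f n - c); have := lipf n nN.
have : L * maxdist (x n) t <= eps.
  rewrite -[eps](divfK (lt0r_neq0 L0)) mulrC ler_wpM2r ?(ltW L0) //.
  by apply: maxdist_le_maxball txn; rewrite divr_ge0 ?(ltW L0).
by move: gap; lra.
Qed.

Lemma uniform_on_cube_maxball_ge (dO : measure_display) (O : measurableType dO)
    (P : probability O R) (a b : R) (X : O -> d.-tuple R) (t : d.-tuple R)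
    (r : R) :
  a < b -> 0 < r -> cube a b t -> uniform_on_cube P a b X ->
  ((Num.min 1 ((r / (b - a)) ^+ d))%:E <= P (X @^-1` maxball t r))%E.
Proof.
move=> ab r0 abt unif.
have ba0 : 0 < b - a by rewrite subr_gt0.
have [r_ge0 ba_ge0] := (ltW r0, ltW ba0).
rewrite unif => [|i]; last exact: measurable_itv.
rewrite -expr_min1 ?divr_ge0 // -[d in _ ^+ d]card_ord -prodr_const -prodEFin.
apply: lee_prod => i _; apply/andP; split.
  by rewrite lee_fin le_min ler01 divr_ge0.
have -> : Num.min 1 (r / (b - a)) = Num.min (b - a) r / (b - a).
  by rewrite minr_pMl ?invr_ge0 // divff // gt_eqF.
rewrite EFinM lee_pmul ?lee_fin ?invr_ge0 ?le_min ?r_ge0 ?ba_ge0 //.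
exact: lebesgue_measure_itvcc_setI_ge.
Qed.

End box.

Lemma measurable_min1N (dO : measure_display) (O : measurableType dO)
    (R : realType) (N : nat) (f : nat -> O -> R) :
  (0 < N)%N -> (forall n, (1 <= n <= N)%N -> measurable_fun setT (f n)) ->
  measurable_fun setT (fun w => min1N N (f^~ w)).
Proof.
move=> N0 mf; rewrite /min1N.
have : forall n, n \in index_iota 2 N.+1 -> measurable_fun setT (f n).
  move=> n; rewrite mem_index_iota ltnS => /andP[n2 nN].
  by apply: mf; rewrite nN ltnW.
elim: (index_iota 2 N.+1) => [|i s IH] ms.
  by under eq_fun do rewrite big_nil; apply: mf; rewrite N0.
under eq_fun do rewrite big_cons.
apply: measurable_minr; first by apply: ms; rewrite mem_head.
by apply: IH => n ns; apply: ms; rewrite in_cons ns orbT.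
Qed.


Lemma measurable_min1N_gap_gt (dO : measure_display) (O : measurableType dO)
    (R : realType) (N : nat) (f : nat -> O -> R) (g : O -> R) (eps : R) :
  (0 < N)%N -> (forall n, (1 <= n <= N)%N -> measurable_fun setT (f n)) ->
  measurable_fun setT g ->
  measurable [set w | eps < min1N N (f^~ w) - g w].
Proof.
move=> N0 mf mg.
have := measurable_funB (measurable_min1N N0 mf) mg measurableT
  (measurable_itv `]eps, +oo[).
rewrite setTI; congr measurable.
by apply/seteqP; split => w; rewrite /= in_itv /= andbT.
Qed.

Lemma measurable_fun_joint_comp (dX dO dY : measure_display)
    (X : measurableType dX) (O : measurableType dO) (Y : measurableType dY)
    (D : set X) (E : X -> O -> Y) (f : O -> X) :
  measurable D -> measurable_fun (D `*` [set: O]) (fun p => E p.1 p.2) ->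
  measurable_fun [set: O] f -> (forall w, D (f w)) ->
  measurable_fun [set: O] (fun w => E (f w) w).
Proof.
move=> mD mE mf Df.
have := measurable_comp (measurableX mD measurableT) _ mE
  (measurable_fun_pair mf (@measurable_id _ _ setT)).
by apply => _ [w _ <-]; split => //; exact: Df.
Qed.

Lemma iid_all_notin_le (dO : measure_display) (O : measurableType dO)
    (R : realType) (P : probability O R) (d N : nat)
    (X : nat -> O -> d.-tuple R) (B : set (d.-tuple R)) (q : R) :
  (forall n, (1 <= n <= N)%N -> measurable_fun [set: O] (X n)) ->
  independent_family P N X -> identically_distributed P N X ->
  measurable B -> (q%:E <= P (X 1%N @^-1` B))%E ->
  (P (\big[setI/setT]_(1 <= n < N.+1) (X n @^-1` ~` B))
   <= ((1 - q) ^+ N)%:E)%E.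
Proof.
move=> mX indep iid mB qB.
rewrite (indep (fun=> ~` B)) => [|_]; last exact: measurableC.
have -> : ((1 - q) ^+ N)%:E = (\prod_(1 <= n < N.+1) (1 - q)%:E)%E.
  by rewrite prodEFin prodr_const_nat subn1.
rewrite big_nat [X in (_ <= X)%E]big_nat.
apply: lee_prod => n /andP[n1]; rewrite ltnS => nN.
have n1N : (1 <= n <= N)%N by rewrite n1.
have mX1B : measurable (X 1%N @^-1` B).
  rewrite -[S in measurable S]setTI; apply: (mX 1%N) => //.
  exact: leq_trans n1 nN.
rewrite measure_ge0 /= iid //; last exact: measurableC.
by rewrite -preimage_setC probability_setC // EFinB leeB.
Qed.

Theorem lemma3p23 (dO : measure_display) (O : measurableType dO)
  (R : realType) (P : probability O R)
  (d N : nat) (a b : R) (theta : d.-tuple R) (L eps : R)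
  (E : d.-tuple R -> O -> R) (Theta : nat -> O -> d.-tuple R) :
  (0 < d)%N -> (0 < N)%N -> a < b -> cube a b theta -> 0 < L -> 0 < eps ->
  measurable_fun (cube a b `*` [set: O]) (fun p : d.-tuple R * O => E p.1 p.2) ->
  (forall x y, cube a b x -> cube a b y -> forall w,
     `|E x w - E y w| <= L * maxdist x y) ->
  (forall n, (1 <= n <= N)%N -> measurable_fun [set: O] (Theta n)) ->
  (forall n, (1 <= n <= N)%N -> forall w, cube a b (Theta n w)) ->
  independent_family P N Theta ->
  identically_distributed P N Theta ->
  uniform_on_cube P a b (Theta 1%N) ->
  (P [set w | min1N N (fun n => E (Theta n w) w) - E theta w > eps]%R
   <= (expR (- N%:R * Num.min 1 (eps ^+ d / (L ^+ d * (b - a) ^+ d))))%:E)%E.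
Proof.
move=> _ N0 ab abtheta L0 eps0 mE lipE mTheta cubeTheta indep iid unif.
set r := eps / L.
have r0 : 0 < r by rewrite divr_gt0.
have mcube := @cube_measurable R d a b.
have mEn n : (1 <= n <= N)%N -> measurable_fun setT (fun w => E (Theta n w) w).
  move=> nN.
  exact: measurable_fun_joint_comp mcube mE (mTheta n nN) (cubeTheta n nN).
have mEtheta : measurable_fun setT (E theta).
  exact: measurable_fun_joint_comp mcube mE (measurable_cst theta) (fun=> abtheta).
have mS := measurable_min1N_gap_gt eps N0 mEn mEtheta.
set S := [set w | _] in mS *.
have S_avoid :
    S `<=` \big[setI/setT]_(1 <= n < N.+1) (Theta n @^-1` ~` maxball theta r).
  move=> w Sw; rewrite -bigcap_seq => n /=; rewrite mem_index_iota ltnS.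
  apply: (min1N_gap_notin_maxball (x := Theta^~ w) L0 (ltW eps0) _ Sw) => m mN.
  exact: lipE (cubeTheta m mN w) abtheta w.
apply: le_trans (le_measure _ (mem_set mS) _ S_avoid) _.
  rewrite inE big_nat; apply: bigsetI_measurable => n /= nN.
  rewrite -[X in measurable X]setTI; apply: mTheta => //.
  by apply: measurableC; exact: maxball_measurable.
have PB := uniform_on_cube_maxball_ge ab r0 abtheta unif.
apply: le_trans
  (iid_all_notin_le mTheta indep iid (maxball_measurable theta r) PB) _.
have -> : eps ^+ d / (L ^+ d * (b - a) ^+ d) = (r / (b - a)) ^+ d.
  by rewrite !expr_div_n invfM mulrA.
by rewrite lee_fin expr1B_le_expR // ge_min lexx.
Qed.
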